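(* Let $(R,\Lambda,S)$ be a generalised Renner–Coxeter system with unit group $W$. For every $r\in R$: (i) there exists a unique triple $(w_1,e,w_2)$ with $e\in\Lambda$, $w_1$ the element of minimal length of the coset $w_1W_\star(e)$, $w_2$ the element of minimal length of the coset $W(e)w_2$, such that $r=w_1ew_2$; (ii) there exists a unique triple $(v_1,e,v_2)$ with $e\in\Lambda$, $v_1$ the element of minimal length of $v_1W(e)$, $v_2$ the element of minimal length of $W_\star(e)v_2$, such that $r=v_1ev_2$.
   Context: For a monoid $R$, $E(R)$ is its set of idempotents, $G(R)$ its unit group. $R$ is factorisable if $R=E(R)G(R)=G(R)E(R)$ and idempotents commute; then $E(R)$ is a semilattice ($e\le f\iff ef=fe=e$) on which $G(R)$ acts by conjugation. For $e\in E(R)$, $W(e)=\{w\in G(R)\mid we=ew\}$, $W_\star(e)=\{w\mid we=ew=e\}$. For a Coxeter system $(W,S)$, $W_I$ is the subgroup generated by $I\subseteq S$ and lengths are Coxeter lengths (each coset of a standard parabolic subgroup has a unique element of minimal length). A generalised Renner–Coxeter system is a triple $(R,\Lambda,S)$ with: (ECS1) $R$ factorisable; (ECS2) $\Lambda\subseteq E(R)$ contains exactly one element of each $G(R)$-orbit and is closed under multiplication; (ECS3) $(G(R),S)$ is a Coxeter system; (ECS4) for $e_1\le e_2$ in $E(R)$ there are $w\in G(R)$, $f_1\le f_2$ in $\Lambda$ with $wf_iw^{-1}=e_i$; (ECS5) for $e\in\Lambda$, $W(e)$, $W_\star(e)$ are of the form $W_I$; (ECS6) with $\lambda^\star(e)=\{s\in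 S\mid se=es\ne e\}$, $e\le f$ in $\Lambda$ implies $\lambda^\star(e)\subseteq\lambda^\star(f)$. $W=G(R)$. *)

From Stdlib Require Import List Arith.
Import ListNotations.

Section Defs.
Context {R : Type} (mul : R -> R -> R) (one : R).

Definition is_monoid : Prop :=
  (forall x y z, mul x (mul y z) = mul (mul x y) z) /\
  (forall x, mul one x = x) /\ (forall x, mul x one = x).

Definition is_unit (x : R) : Prop := exists y, mul x y = one /\ mul y x = one.

Definition idem (e : R) : Prop := mul e e = e.

Definition leE (e f : R) : Prop := mul e f = e /\ mul f e = e.

Definition conj_by (w f e : R) : Prop :=
  exists w', mul w w' = one /\ mul w' w = one /\ mul (mul w f) w' = e.

Definition prod (l : list R) : R := fold_right mul one l.

Fixpoint pow (x : R) (n : nat) : R :=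
  match n with O => one | S n => mul x (pow x n) end.

Definition factorisable : Prop :=
  (forall r, exists e w, idem e /\ is_unit w /\ r = mul e w) /\
  (forall r, exists w e, is_unit w /\ idem e /\ r = mul w e) /\
  (forall e f, idem e -> idem f -> mul e f = mul f e).

(* (G(R), S) is a Coxeter system: S is a set of involutions (distinct from 1)
   generating G(R), and G(R) has the presentation
   < S | (st)^{m(s,t)} = 1 >, m(s,t) the order of st, i.e. every map from S
   into a group respecting these relations extends to a homomorphism. *)
Definition coxeter_system (S : R -> Prop) : Prop :=
  (forall s, S s -> is_unit s /\ s <> one /\ mul s s = one) /\
  (forall w, is_unit w -> exists l, Forall S l /\ prod l = w) /\
  (forall (H : Type) (hmul : H -> H -> H) (hone : H) (hinv : H -> H),
     (forall x y z, hmul x (hmul y z) = hmul (hmul x y) z) ->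
     (forall x, hmul hone x = x) -> (forall x, hmul x hone = x) ->
     (forall x, hmul (hinv x) x = hone) -> (forall x, hmul x (hinv x) = hone) ->
     forall f : R -> H,
       (forall s t n, S s -> S t -> pow (mul s t) n = one ->
          fold_right hmul hone (repeat (hmul (f s) (f t)) n) = hone) ->
       exists phi : R -> H,
         (forall x y, is_unit x -> is_unit y -> phi (mul x y) = hmul (phi x) (phi y)) /\
         (forall s, S s -> phi s = f s)).

Definition parabolic (I : R -> Prop) (w : R) : Prop :=
  exists l, Forall I l /\ prod l = w.

Definition clen (S : R -> Prop) (w : R) (n : nat) : Prop :=
  (exists l, Forall S l /\ length l = n /\ prod l = w) /\
  (forall l, Forall S l -> prod l = w -> n <= length l).

Definition Wc (e w : R) : Prop := is_unit w /\ mul w e = mul e w.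
Definition Wstar (e w : R) : Prop := is_unit w /\ mul w e = e /\ mul e w = e.

Definition min_left (S H : R -> Prop) (w : R) : Prop :=
  forall u, H u -> forall n m, clen S w n -> clen S (mul w u) m -> n <= m.
Definition min_right (S H : R -> Prop) (w : R) : Prop :=
  forall u, H u -> forall n m, clen S w n -> clen S (mul u w) m -> n <= m.

Definition lam_star (S : R -> Prop) (e s : R) : Prop :=
  S s /\ mul s e = mul e s /\ mul s e <> e.

Definition gen_renner_coxeter (Lambda S : R -> Prop) : Prop :=
  is_monoid /\
  (* ECS1 *) factorisable /\
  (* ECS2 *) (forall e, Lambda e -> idem e) /\
             (forall e, idem e -> exists f, Lambda f /\ (exists w, is_unit w /\ conj_by w f e) /\
                 forall f', Lambda f' -> (exists w, is_unit w /\ conj_by w f' e) -> f' = f) /\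
             (forall e f, Lambda e -> Lambda f -> Lambda (mul e f)) /\
  (* ECS3 *) (forall s, S s -> is_unit s) /\ coxeter_system S /\
  (* ECS4 *) (forall e1 e2, idem e1 -> idem e2 -> leE e1 e2 ->
                exists w f1 f2, is_unit w /\ Lambda f1 /\ Lambda f2 /\ leE f1 f2 /\
                  conj_by w f1 e1 /\ conj_by w f2 e2) /\
  (* ECS5 *) (forall e, Lambda e ->
                (exists I, (forall s, I s -> S s) /\ forall w, Wc e w <-> parabolic I w) /\
                (exists I, (forall s, I s -> S s) /\ forall w, Wstar e w <-> parabolic I w)) /\
  (* ECS6 *) (forall e f, Lambda e -> Lambda f -> leE e f ->
                forall s, lam_star S e s -> lam_star S f s).

End Defs.

From Stdlib Require Import List Arith Lia Wf_nat Bool.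
From Stdlib Require Import Classical ClassicalEpsilon FunctionalExtensionality ProofIrrelevance.
Import ListNotations.

(* Every r is a e b with a, b units and e in Lambda. Since idempotents commute, a e b = e forces
   a in W(e) and a b in W_star(e); hence e is determined by r, and two decompositions with the same
   e differ by an element of W(e) moved across e and an element of W_star(e) absorbed by it.
   Existence follows by choosing minimal coset representatives, first for W(e) and then for
   W_star(e); uniqueness from the uniqueness of minimal representatives of cosets of a standard
   parabolic subgroup W_I, i.e. l(w u) = l(w) + l_I(u) for w minimal in w W_I. That length
   formula rests on the exchange condition, which Tits' construction derives from the Coxeter
   presentation. *)

Lemma nat_least (P : nat -> Prop) :
  (exists n, P n) -> exists n, P n /\ forall m, P m -> n <= m.
Proof.
  intro ex.
  destruct (dec_inh_nat_subset_has_unique_least_element P (fun n => classic (P n)) ex)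
    as [n [[Pn least] _]].
  now exists n.
Qed.

Lemma cat_eq_cat_cons {T : Type} (a k l1 l2 : list T) (s : T) :
  a ++ k = l1 ++ s :: l2 ->
  (exists a2, a = l1 ++ s :: a2 /\ l2 = a2 ++ k) \/
  (exists k1, k = k1 ++ s :: l2 /\ l1 = a ++ k1).
Proof.
  intro e. destruct (app_eq_app a k l1 (s :: l2) e) as [m [[-> em] | [-> ek]]].
  - destruct m as [|x a2]; simpl in em.
    + right. exists []. split; [easy | now rewrite !app_nil_r].
    + injection em as -> ->. left. now exists a2.
  - right. now exists m.
Qed.

Definition eqcl {T : Type} (a b : T) : bool :=
  if excluded_middle_informative (a = b) then true else false.

Lemma eqclP {T : Type} (a b : T) : eqcl a b = true <-> a = b.
Proof. unfold eqcl; destruct excluded_middle_informative; split; congruence. Qed.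

Lemma eqcl_ext {T : Type} (a b c d : T) : (a = b <-> c = d) -> eqcl a b = eqcl c d.
Proof.
  unfold eqcl; intro h.
  destruct (excluded_middle_informative (a = b)), (excluded_middle_informative (c = d)); tauto.
Qed.

Lemma eqcl_refl {T : Type} (a : T) : eqcl a a = true.
Proof. now apply eqclP. Qed.

Section Monoid.
Context {R : Type} (mul : R -> R -> R) (one : R).
Hypotheses (mulA : forall x y z, mul x (mul y z) = mul (mul x y) z)
  (mul1l : forall x, mul one x = x) (mul1r : forall x, mul x one = x).
Local Notation U := (is_unit mul one).

Definition uinv (w : R) : R :=
  match excluded_middle_informative (U w) with
  | left h => proj1_sig (constructive_indefinite_description _ h)
  | right _ => one
  end.

Local Notation inv := uinv.

Lemma uinv_spec w : U w -> mul w (inv w) = one /\ mul (inv w) w = one.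
Proof.
  intro h; unfold uinv; destruct excluded_middle_informative as [h' | n]; [|contradiction].
  exact (proj2_sig (constructive_indefinite_description _ h')).
Qed.

Lemma muluV w : U w -> mul w (inv w) = one.
Proof. intro h; apply (uinv_spec w h). Qed.

Lemma mulVu w : U w -> mul (inv w) w = one.
Proof. intro h; apply (uinv_spec w h). Qed.

Lemma uinv_uniq w v : U w -> mul w v = one -> inv w = v.
Proof.
  intros h e. rewrite <- (mul1r (inv w)), <- e, mulA, mulVu; auto.
Qed.

Lemma unit1 : U one.
Proof. exists one; auto. Qed.

Lemma unitM a b : U a -> U b -> U (mul a b).
Proof.
  intros [a' [h1 h2]] [b' [h3 h4]]. exists (mul b' a'). split.
  - now rewrite <- mulA, (mulA b b' a'), h3, mul1l.
  - now rewrite <- mulA, (mulA a' a b), h2, mul1l.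
Qed.

Lemma unitV a : U a -> U (inv a).
Proof. intro h; exists a; split; [apply mulVu | apply muluV]; auto. Qed.

Lemma mulKu w x : U w -> mul (inv w) (mul w x) = x.
Proof. intro h; now rewrite mulA, mulVu, mul1l. Qed.

Lemma mulVKu w x : U w -> mul w (mul (inv w) x) = x.
Proof. intro h; now rewrite mulA, muluV, mul1l. Qed.

Lemma muluK w x : U w -> mul (mul x w) (inv w) = x.
Proof. intro h; now rewrite <- mulA, muluV, mul1r. Qed.

Lemma muluVK w x : U w -> mul (mul x (inv w)) w = x.
Proof. intro h; now rewrite <- mulA, mulVu, mul1r. Qed.

Lemma uinvK a : U a -> inv (inv a) = a.
Proof. intro h; apply uinv_uniq; [apply unitV | apply mulVu]; auto. Qed.

Lemma uinvM a b : U a -> U b -> inv (mul a b) = mul (inv b) (inv a).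
Proof.
  intros ha hb; apply uinv_uniq; [now apply unitM|].
  now rewrite <- mulA, mulVKu, muluV.
Qed.

Lemma uinv1 : inv one = one.
Proof. apply uinv_uniq; [apply unit1 | apply mul1l]. Qed.

Lemma mulIu a x y : U a -> mul a x = mul a y -> x = y.
Proof. intros h e; now rewrite <- (mulKu a x), e, mulKu. Qed.

Lemma conj_eq_iff a u c : U a ->
  mul (mul a u) (inv a) = c <-> u = mul (mul (inv a) c) a.
Proof.
  intro h; split; intro e.
  - subst c. now rewrite (mulA (inv a) (mul a u)), mulKu, muluVK.
  - subst u. now rewrite (mulA a), mulVKu, muluK.
Qed.

Lemma sandwich_of_eq e e' w1 w2 w1' w2' : U w1 -> U w2 -> U w1' -> U w2' ->
  mul (mul w1 e) w2 = mul (mul w1' e') w2' ->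
  mul (mul (mul (inv w1') w1) e) (mul w2 (inv w2')) = e'.
Proof.
  intros u1 u2 u1' u2' eq.
  rewrite mulA, <- (mulA (inv w1') w1 e), <- (mulA (inv w1')), eq.
  now rewrite (mulA (inv w1')), (mulA (inv w1')), mulVu, mul1l, muluK.
Qed.

Lemma Wc_mul e a b : Wc mul one e a -> Wc mul one e b -> Wc mul one e (mul a b).
Proof.
  intros [ua ae] [ub be]; split; [now apply unitM|].
  now rewrite <- mulA, be, !mulA, ae.
Qed.

Lemma Wc_uinv e a : Wc mul one e a -> Wc mul one e (inv a).
Proof.
  intros [ua ae]; split; [now apply unitV|].
  apply (mulIu a); [exact ua|].
  now rewrite mulVKu, mulA, ae, muluK.
Qed.

Lemma Wstar_Wc e w : Wstar mul one e w -> Wc mul one e w.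
Proof. intros [uw [we ew]]; split; congruence. Qed.

Lemma prod_cat l1 l2 : prod mul one (l1 ++ l2) = mul (prod mul one l1) (prod mul one l2).
Proof. induction l1 as [|x l1 IH]; simpl; [now rewrite mul1l | now rewrite IH, mulA]. Qed.

Lemma pow_add x a b : pow mul one x (a + b) = mul (pow mul one x a) (pow mul one x b).
Proof. induction a as [|a IH]; simpl; [now rewrite mul1l | now rewrite IH, mulA]. Qed.

Lemma powSr x k : pow mul one x (S k) = mul (pow mul one x k) x.
Proof. now rewrite <- Nat.add_1_r, pow_add; simpl; rewrite mul1r. Qed.

Lemma mul_pow_inverse x y : mul x y = one ->
  forall k, mul (pow mul one x k) (pow mul one y k) = one.
Proof.
  intros xy k; induction k as [|k IH]; [apply mul1l|].
  rewrite powSr; change (pow mul one y (S k)) with (mul y (pow mul one y k)).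
  now rewrite <- mulA, (mulA x y), xy, mul1l.
Qed.

Lemma uinv_pow x y : mul x y = one -> mul y x = one ->
  forall k, inv (pow mul one x k) = pow mul one y k.
Proof.
  intros xy yx k; apply uinv_uniq; [|now apply mul_pow_inverse].
  exists (pow mul one y k); split; now apply mul_pow_inverse.
Qed.

Fixpoint xorsum (g : nat -> bool) (n : nat) : bool :=
  match n with 0 => false | S n => xorb (xorsum g n) (g n) end.

Lemma xorsum_ext g h n : (forall k, g k = h k) -> xorsum g n = xorsum h n.
Proof. intro e; induction n; simpl; congruence. Qed.

Lemma xorsum_pairs g n :
  xorsum (fun k => xorb (g (k + k)) (g (k + S k))) n = xorsum g (n + n).
Proof.
  induction n as [|n IH]; simpl; [easy|].
  now rewrite IH, Nat.add_succ_r; simpl; rewrite xorb_assoc.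
Qed.

Lemma xorsum_add g n m : xorsum g (n + m) = xorb (xorsum g n) (xorsum (fun j => g (n + j)) m).
Proof.
  induction m as [|m IH]; simpl; [now rewrite Nat.add_0_r, xorb_false_r|].
  now rewrite Nat.add_succ_r; simpl; rewrite IH, xorb_assoc.
Qed.

(* Tits' construction: units act on subsets of [R] (as predicates [R -> bool], added by xor)
   by conjugation. The Coxeter presentation maps a generator [s] to [(s, {s})] in the
   semidirect product; the subset attached to [w] is then its set of right reflections. *)
Definition tits : Type := {p : R * (R -> bool) | U (fst p)}.
Definition tval (x : tits) : R := fst (proj1_sig x).
Definition tset (x : tits) : R -> bool := snd (proj1_sig x).

Lemma tval_unit x : U (tval x).
Proof. exact (proj2_sig x). Qed.

Lemma tits_eq x y : tval x = tval y -> (forall t, tset x t = tset y t) -> x = y.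
Proof.
  destruct x as [[w A] hx], y as [[w' A'] hy]; unfold tval, tset; simpl; intros <- eA.
  assert (A = A') as <- by (extensionality t; apply eA).
  f_equal; apply proof_irrelevance.
Qed.

Definition tmul (x y : tits) : tits :=
  exist _ (mul (tval x) (tval y),
           fun t => xorb (tset y t) (tset x (mul (mul (tval y) t) (inv (tval y)))))
        (unitM _ _ (tval_unit x) (tval_unit y)).
Definition tone : tits := exist _ (one, fun _ => false) unit1.
Definition tinv (x : tits) : tits :=
  exist _ (inv (tval x), fun t => tset x (mul (mul (inv (tval x)) t) (tval x)))
        (unitV _ (tval_unit x)).

Lemma tmulA x y z : tmul x (tmul y z) = tmul (tmul x y) z.
Proof.
  apply tits_eq; [apply mulA|]; intro t; cbn.
  rewrite xorb_assoc, uinvM by apply tval_unit.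
  now rewrite !mulA.
Qed.

Lemma tmul1l x : tmul tone x = x.
Proof. apply tits_eq; [apply mul1l|]; intro t; apply xorb_false_r. Qed.

Lemma tmul1r x : tmul x tone = x.
Proof.
  apply tits_eq; [apply mul1r|]; intro t; cbn.
  now rewrite uinv1, mul1l, mul1r.
Qed.

Lemma tmulVt x : tmul (tinv x) x = tone.
Proof.
  apply tits_eq; [apply mulVu, tval_unit|]; intro t; cbn.
  rewrite !mulA, mulVu, mul1l, muluVK by apply tval_unit.
  apply xorb_nilpotent.
Qed.

Lemma tmultV x : tmul x (tinv x) = tone.
Proof.
  apply tits_eq; [apply muluV, tval_unit|]; intro t; cbn.
  rewrite uinvK by apply tval_unit.
  apply xorb_nilpotent.
Qed.

Definition tgen (s : R) : tits :=
  match excluded_middle_informative (U s) with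
  | left h => exist _ (s, fun t => eqcl t s) h
  | right _ => tone
  end.

Lemma tgen_val s : U s -> tval (tgen s) = s.
Proof. intro h; unfold tgen; now destruct excluded_middle_informative. Qed.

Lemma tgen_set s t : U s -> tset (tgen s) t = eqcl t s.
Proof. intro h; unfold tgen; now destruct excluded_middle_informative. Qed.

Definition tpow (g : tits) (n : nat) : tits := fold_right tmul tone (repeat g n).

Lemma tpow_val g n : tval (tpow g n) = pow mul one (tval g) n.
Proof. induction n as [|n IH]; [easy|]. cbn; now rewrite <- IH. Qed.

Lemma tpow_set g n u : tset (tpow g n) u =
  xorsum (fun k => tset g (mul (mul (pow mul one (tval g) k) u) (inv (pow mul one (tval g) k)))) n.
Proof.
  induction n as [|n IH]; [easy|].
  cbn; rewrite <- IH; fold (tpow g n); now rewrite tpow_val.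
Qed.

Lemma tgen_braid s t n : mul s s = one -> mul t t = one ->
  pow mul one (mul s t) n = one -> tpow (tmul (tgen s) (tgen t)) n = tone.
Proof.
  intros ss tt hn.
  assert (us : U s) by (exists s; auto). assert (ut : U t) by (exists t; auto).
  set (x := mul s t) in *. set (y := mul t s).
  assert (xy : mul x y = one) by (unfold x, y; now rewrite <- mulA, (mulA t t s), tt, mul1l).
  assert (yx : mul y x = one) by (unfold x, y; now rewrite <- mulA, (mulA s s t), ss, mul1l).
  assert (ux : forall k, U (pow mul one x k)).
  { intro k; exists (pow mul one y k); split; now apply mul_pow_inverse. }
  assert (tx : forall k, mul t (pow mul one x k) = mul (pow mul one y k) t).
  { assert (t1 : mul t x = mul y t) by apply mulA.
    induction k as [|k IH]; [now rewrite mul1l, mul1r|]; cbn [pow].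
    now rewrite mulA, t1, <- mulA, IH, mulA. }
  assert (yn : pow mul one y n = one).
  { transitivity (mul (pow mul one x n) (pow mul one y n)); [now rewrite hn, mul1l|].
    now apply mul_pow_inverse. }
  assert (it : inv t = t) by (now apply uinv_uniq).
  apply tits_eq.
  { now rewrite tpow_val; cbn [tval tmul proj1_sig fst]; rewrite !tgen_val. }
  intro u; rewrite tpow_set; cbn [tval tmul proj1_sig fst]; rewrite !tgen_val by auto; fold x.
  (* The k-th factor contributes the reflections y^(2k) t and y^(2k+1) t; for k < n these
     are the y^j t with j < 2n, which cancel in pairs because y^n = 1. *)
  set (D j := eqcl u (mul (pow mul one y j) t)).
  rewrite (xorsum_ext _ (fun k => xorb (D (k + k)) (D (k + S k)))).
  { rewrite xorsum_pairs, xorsum_add, (xorsum_ext (fun j => D (n + j)) D).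
    - apply xorb_nilpotent.
    - intro j; unfold D; now rewrite pow_add, yn, mul1l. }
  intro k; cbn [tset tmul proj1_sig snd]; rewrite !tgen_set, tgen_val by auto.
  unfold D; f_equal; apply eqcl_ext.
  - rewrite conj_eq_iff, (uinv_pow x y) by auto.
    rewrite <- mulA, tx, mulA, <- pow_add; tauto.
  - rewrite (conj_eq_iff t), conj_eq_iff, it, (uinv_pow x y) by auto.
    rewrite pow_add; cbn [pow]; fold y.
    now rewrite <- !mulA, tx.
Qed.

Lemma clen_exists (G : R -> Prop) w : parabolic mul one G w -> exists n, clen mul one G w n.
Proof.
  intro hw.
  destruct (nat_least (fun n => exists l, Forall G l /\ length l = n /\ prod mul one l = w))
    as [n [hn least]].
  { destruct hw as [l [hl el]]; now exists (length l), l. }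
  exists n; split; [exact hn|].
  intros l hl el; apply least; now exists l.
Qed.

Lemma clen_fun (G : R -> Prop) w n m : clen mul one G w n -> clen mul one G w m -> n = m.
Proof.
  intros [[l [hl [<- el]]] least] [[l' [hl' [<- el']]] least'].
  apply Nat.le_antisymm; [apply least | apply least']; congruence.
Qed.

Lemma clen_removelast (G : R -> Prop) k s : Forall G (k ++ [s]) ->
  clen mul one G (prod mul one (k ++ [s])) (length (k ++ [s])) ->
  clen mul one G (prod mul one k) (length k).
Proof.
  intros hks [_ least]; apply Forall_app in hks as [hk hs].
  split; [now exists k|]; intros k' hk' ek'.
  enough (length (k ++ [s]) <= length (k' ++ [s])) by (rewrite !length_app in *; lia).
  apply least; [now apply Forall_app|]; now rewrite !prod_cat, ek'.
Qed.

Lemma parabolic_one (G : R -> Prop) : parabolic mul one G one.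
Proof. now exists []. Qed.

Lemma parabolic_mul (G : R -> Prop) a b :
  parabolic mul one G a -> parabolic mul one G b -> parabolic mul one G (mul a b).
Proof.
  intros [l [hl <-]] [l' [hl' <-]]; exists (l ++ l'); split; [now apply Forall_app|].
  apply prod_cat.
Qed.

Section Coxeter.
Variables (S : R -> Prop) (Hcox : coxeter_system mul one S).

Lemma gen_involution s : S s -> U s /\ mul s s = one.
Proof. intro hs; destruct Hcox as [HS _]; now destruct (HS s hs) as [? [_ ?]]. Qed.

Lemma uinv_gen s : S s -> inv s = s.
Proof. intro hs; apply uinv_uniq; apply gen_involution, hs. Qed.

Lemma prod_unit l : Forall S l -> U (prod mul one l).
Proof.
  induction 1; [apply unit1|]; apply unitM; [apply gen_involution|]; auto.
Qed.

Definition exchange_function (N : R -> R -> bool) : Prop :=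
  (forall l t, Forall S l -> N (prod mul one l) t = true ->
     exists l1 s l2, l = l1 ++ s :: l2 /\ mul (prod mul one l) t = prod mul one (l1 ++ l2)) /\
  (forall w s, U w -> S s -> N (mul w s) s = negb (N w s)).

Section TitsHomomorphism.
Variables (phi : R -> tits)
  (phiM : forall x y, U x -> U y -> phi (mul x y) = tmul (phi x) (phi y))
  (phiS : forall s, S s -> phi s = tgen s).

Lemma phi_one : phi one = tone.
Proof.
  assert (e : phi one = tmul (phi one) (phi one)) by (rewrite <- phiM, mul1l; auto; apply unit1).
  transitivity (tmul (tinv (phi one)) (tmul (phi one) (phi one))).
  - now rewrite tmulA, tmulVt, tmul1l.
  - now rewrite <- e, tmulVt.
Qed.

Lemma tval_phi_prod l : Forall S l -> tval (phi (prod mul one l)) = prod mul one l.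
Proof.
  induction 1 as [|s l hs hl IH]; [cbn; now rewrite phi_one|].
  change (prod mul one (s :: l)) with (mul s (prod mul one l)).
  assert (us : U s) by apply (gen_involution s hs).
  rewrite phiM, (phiS s hs) by auto using prod_unit; cbn [tval tmul proj1_sig fst].
  rewrite tgen_val by auto; now f_equal.
Qed.

Lemma tset_phi_exchange : exchange_function (fun w t => tset (phi w) t).
Proof.
  split.
  - intros l u hl; induction hl as [|s l hs hl IH]; [cbn; now rewrite phi_one|].
    change (prod mul one (s :: l)) with (mul s (prod mul one l)).
    assert (us : U s) by apply (gen_involution s hs).
    rewrite phiM, (phiS s hs) by auto using prod_unit; cbn [tset tmul proj1_sig snd].
    rewrite tgen_set, tval_phi_prod by auto.
    destruct (tset (phi (prod mul one l)) u) eqn:el; simpl.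
    + intros _; destruct (IH eq_refl) as [l1 [s0 [l2 [-> e]]]].
      exists (s :: l1), s0, l2; split; [easy|]; cbn [prod fold_right app].
      now rewrite <- mulA, e.
    + intro e; apply eqclP, conj_eq_iff in e; [|now apply prod_unit].
      exists [], s, l; split; [easy|]; cbn [prod fold_right app].
      rewrite e, !mulA, muluK by now apply prod_unit.
      now rewrite (proj2 (gen_involution s hs)), mul1l.
  - intros w s uw hs; destruct (gen_involution s hs) as [us ss].
    rewrite phiM, (phiS s hs) by auto; cbn [tset tmul proj1_sig snd].
    rewrite tgen_set, tgen_val, eqcl_refl, ss, mul1l, uinv_gen by auto.
    now destruct (tset (phi w) s).
Qed.

End TitsHomomorphism.

Lemma coxeter_exchange : exists N, exchange_function N.
Proof.
  destruct Hcox as [HS [_ Huniv]].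
  destruct (Huniv tits tmul tone tinv tmulA tmul1l tmul1r tmulVt tmultV tgen)
    as [phi [phiM phiS]].
  { intros s t n hs ht; apply tgen_braid; apply HS; auto. }
  eexists; exact (tset_phi_exchange phi phiM phiS).
Qed.

Lemma clen_unit w : U w -> exists n, clen mul one S w n.
Proof. intro uw; apply clen_exists; destruct Hcox as [_ [Hgen _]]; now apply Hgen. Qed.

Lemma uinv_prod l : Forall S l -> inv (prod mul one l) = prod mul one (rev l).
Proof.
  intro hl; apply uinv_uniq; [now apply prod_unit|].
  induction hl as [|s l hs hl IH]; [apply mul1l|]; cbn [rev].
  rewrite prod_cat; change (prod mul one (s :: l)) with (mul s (prod mul one l)).
  cbn [prod fold_right]; rewrite mul1r, <- mulA, (mulA (prod mul one l)), IH, mul1l.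
  apply gen_involution, hs.
Qed.

Lemma clen_uinv w n : U w -> clen mul one S w n -> clen mul one S (inv w) n.
Proof.
  intros uw [[l [hl [<- <-]]] least]; split.
  - exists (rev l); split; [now apply Forall_rev|].
    now rewrite length_rev, uinv_prod.
  - intros l' hl' el'; rewrite <- (length_rev l'); apply least; [now apply Forall_rev|].
    now rewrite <- uinv_prod, el', uinvK by auto using prod_unit.
Qed.

Section Parabolic.
Variables (I : R -> Prop) (HI : forall s, I s -> S s).
Variables (WI : R -> Prop) (HWI : forall w, WI w <-> parabolic mul one I w).

Lemma Forall_I_S l : Forall I l -> Forall S l.
Proof. intro hl; eapply Forall_impl; [exact HI | exact hl]. Qed.

Lemma WI_prod l : Forall I l -> WI (prod mul one l).
Proof. intro hl; apply HWI; now exists l. Qed.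

Lemma WI_one : WI one.
Proof. apply HWI, parabolic_one. Qed.

Lemma WI_mul a b : WI a -> WI b -> WI (mul a b).
Proof. rewrite !HWI; apply parabolic_mul. Qed.

Lemma WI_unit h : WI h -> U h.
Proof. intros [l [hl <-]]%HWI; now apply prod_unit, Forall_I_S. Qed.

Lemma WI_uinv h : WI h -> WI (inv h).
Proof.
  intros [l [hl <-]]%HWI; rewrite uinv_prod by now apply Forall_I_S.
  apply WI_prod; now apply Forall_rev.
Qed.

Section Exchange.
Variables (N : R -> R -> bool) (HN : exchange_function N).

Lemma clen_descent w s n m : S s -> clen mul one S w n -> clen mul one S (mul w s) m ->
  N w s = true -> m + 1 = n.
Proof.
  intros hs [[l [hl [<- <-]]] least] [[l' [hl' [<- el']]] least'] e.
  destruct (proj1 HN l s hl e) as [l1 [s0 [l2 [-> e']]]].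
  apply Forall_app in hl as hl12; destruct hl12 as [hl1 hl2]; inversion hl2; subst.
  assert (length l' <= length (l1 ++ l2)) by (apply least'; [apply Forall_app|]; auto).
  assert (length (l1 ++ s0 :: l2) <= length (l' ++ [s])).
  { apply least; [apply Forall_app; auto|].
    rewrite prod_cat, el'; cbn [prod fold_right].
    now rewrite mul1r, <- mulA, (proj2 (gen_involution s hs)), mul1r. }
  rewrite !length_app in *; cbn [length] in *; lia.
Qed.

Lemma clen_ascent w s n m : U w -> S s -> clen mul one S w n -> clen mul one S (mul w s) m ->
  N w s = false -> m = n + 1.
Proof.
  intros uw hs hn hm e; destruct (gen_involution s hs) as [us ss].
  symmetry; apply (clen_descent (mul w s) s m n hs hm).
  - now rewrite <- mulA, ss, mul1r.
  - rewrite (proj2 HN) by auto; now rewrite e.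
Qed.

(* A descent at the end of [w k s] would delete a letter either from a reduced word for [w],
   shortening [w] within its coset, or from [k s], contradicting reducedness. *)
Lemma min_left_no_descent w k s : U w -> min_left mul one S WI w ->
  Forall I (k ++ [s]) -> clen mul one I (prod mul one (k ++ [s])) (length (k ++ [s])) ->
  N (mul w (prod mul one k)) s = false.
Proof.
  intros uw wmin hks kred; destruct (N _ s) eqn:Ev; [exfalso | reflexivity].
  apply Forall_app in hks as hks'; destruct hks' as [hkI hsI].
  assert (uk : U (prod mul one k)) by auto using prod_unit, Forall_I_S.
  destruct (clen_unit w uw) as [p hp]; pose proof hp as [[a [ha [la pa]]] _].
  assert (hak : Forall S (a ++ k)) by (apply Forall_app; auto using Forall_I_S).
  rewrite <- pa, <- prod_cat in Ev; destruct (proj1 HN _ s hak Ev) as [l1 [s0 [l2 [e1 e2]]]].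
  rewrite prod_cat, pa in e2.
  destruct (cat_eq_cat_cons a k l1 l2 s0 e1) as [[a2 [-> ->]] | [k1 [-> ->]]].
  - set (z := mul (mul (prod mul one k) s) (inv (prod mul one k))).
    assert (hz : WI z).
    { repeat apply WI_mul; try apply WI_uinv; try now apply WI_prod.
      replace s with (prod mul one [s]) by apply mul1r; now apply WI_prod. }
    assert (ewz : mul w z = prod mul one (l1 ++ a2)).
    { unfold z; rewrite !mulA, e2, app_assoc, prod_cat; now apply muluK. }
    apply Forall_app in ha as [ha1 ha2]; inversion ha2 as [|? ? hs0 ha2'].
    destruct (clen_exists S (mul w z)) as [m hm].
    { rewrite ewz; exists (l1 ++ a2); split; [apply Forall_app|]; auto. }
    assert (p <= m) by (now apply (wmin z hz)).
    assert (m <= length (l1 ++ a2)) by (apply hm; [apply Forall_app|]; auto).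
    rewrite !length_app in *; cbn [length] in *; lia.
  - rewrite <- app_assoc, !prod_cat, <- !mulA, pa in e2; apply mulIu in e2; [|exact uw].
    apply Forall_app in hkI as [hk1 hk2]; inversion hk2 as [|? ? hs0 hk2'].
    enough (length ((k1 ++ s0 :: l2) ++ [s]) <= length (k1 ++ l2))
      by (rewrite !length_app in *; cbn [length] in *; lia).
    apply kred; [apply Forall_app; auto|].
    rewrite !prod_cat, <- e2; cbn [prod fold_right]; now rewrite mul1r, mulA.
Qed.

Lemma clen_mul_min_left_word w p k : U w -> min_left mul one S WI w ->
  clen mul one S w p -> Forall I k -> clen mul one I (prod mul one k) (length k) ->
  clen mul one S (mul w (prod mul one k)) (p + length k).
Proof.
  intros uw wmin hp; induction k as [|s k IH] using rev_ind; intros hk kred.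
  { cbn; now rewrite mul1r, Nat.add_0_r. }
  assert (hks := hk); apply Forall_app in hks as [hkI hsI]; inversion hsI as [|? ? hs _].
  assert (hv := IH hkI (clen_removelast I k s hk kred)).
  assert (us : U s) by (apply gen_involution, HI, hs).
  assert (uv : U (mul w (prod mul one k))) by (apply unitM; auto using prod_unit, Forall_I_S).
  destruct (clen_unit _ (unitM _ _ uv us)) as [m hm].
  rewrite prod_cat, length_app, Nat.add_assoc; cbn [prod fold_right length].
  rewrite mul1r, mulA, <- (clen_ascent _ s _ m uv (HI s hs) hv hm); [exact hm|].
  now apply min_left_no_descent.
Qed.

End Exchange.

Lemma clen_mul_min_left w u p q : U w -> min_left mul one S WI w ->
  clen mul one S w p -> clen mul one I u q -> clen mul one S (mul w u) (p + q).
Proof.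
  intros uw wmin hp hq; destruct coxeter_exchange as [N HN].
  pose proof hq as [[k [hk [<- <-]]] _].
  apply (clen_mul_min_left_word N HN); auto.
Qed.

Lemma min_left_unique w w' u : U w -> min_left mul one S WI w ->
  min_left mul one S WI w' -> WI u -> w' = mul w u -> w' = w.
Proof.
  intros uw wmin w'min hu ->.
  destruct (clen_unit w uw) as [p hp]; destruct (clen_exists I u (proj1 (HWI u) hu)) as [q hq].
  assert (uu := WI_unit u hu).
  assert (p + q <= p).
  { apply (w'min (inv u) (WI_uinv u hu)); [now apply clen_mul_min_left|].
    now rewrite muluK. }
  destruct hq as [[k [_ [lk <-]]] _]; destruct k as [|s k]; cbn in lk |- *; [apply mul1r | lia].
Qed.

Lemma min_left_uinv z : U z -> min_right mul one S WI z ->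
  min_left mul one S WI (inv z).
Proof.
  intros uz zmin u hu n m hn hm; assert (uu := WI_unit u hu).
  apply (zmin (inv u) (WI_uinv u hu)).
  - rewrite <- (uinvK z) by exact uz; apply clen_uinv; [apply unitV|]; auto.
  - rewrite <- (uinvK (mul (inv u) z)) by auto using unitM, unitV.
    apply clen_uinv; [apply unitV, unitM; auto using unitV|].
    rewrite uinvM, uinvK by auto using unitV; exact hm.
Qed.

Lemma min_right_uinv z : U z -> min_left mul one S WI z ->
  min_right mul one S WI (inv z).
Proof.
  intros uz zmin u hu n m hn hm; assert (uu := WI_unit u hu).
  apply (zmin (inv u) (WI_uinv u hu)).
  - rewrite <- (uinvK z) by exact uz; apply clen_uinv; [apply unitV|]; auto.
  - rewrite <- (uinvK (mul z (inv u))) by auto using unitM, unitV.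
    apply clen_uinv; [apply unitV, unitM; auto using unitV|].
    rewrite uinvM, uinvK by auto using unitV; exact hm.
Qed.

Lemma min_right_unique w w' u : U w -> min_right mul one S WI w ->
  min_right mul one S WI w' -> WI u -> w' = mul u w -> w' = w.
Proof.
  intros uw wmin w'min hu e; assert (uu := WI_unit u hu).
  assert (uw' : U w') by (rewrite e; now apply unitM).
  rewrite <- (uinvK w), <- (uinvK w') by auto; f_equal.
  apply (min_left_unique (inv w) (inv w') (inv u)); auto using unitV, min_left_uinv, WI_uinv.
  now rewrite e, uinvM.
Qed.

Lemma min_left_exists w : U w ->
  exists h, WI h /\ min_left mul one S WI (mul w h).
Proof.
  intro uw.
  destruct (nat_least (fun n => exists h, WI h /\ clen mul one S (mul w h) n))
    as [n [[h [hh hn]] least]].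
  { destruct (clen_unit w uw) as [p hp]; exists p, one; split; [apply WI_one|].
    now rewrite mul1r. }
  exists h; split; [exact hh|]; intros u hu n' m hn' hm.
  rewrite (clen_fun S _ n' n hn' hn); apply least.
  exists (mul h u); split; [now apply WI_mul | now rewrite mulA].
Qed.

Lemma min_right_exists w : U w ->
  exists h, WI h /\ min_right mul one S WI (mul h w).
Proof.
  intro uw; destruct (min_left_exists (inv w)) as [h [hh hmin]]; [now apply unitV|].
  assert (uh := WI_unit h hh).
  exists (inv h); split; [now apply WI_uinv|].
  apply min_right_uinv in hmin; [|apply unitM; auto using unitV].
  now rewrite uinvM, uinvK in hmin by auto using unitV.
Qed.

End Parabolic.

End Coxeter.

Section CommutingIdempotents.
Hypothesis idemC : forall e f, idem mul e -> idem mul f -> mul e f = mul f e.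

Lemma idem_conj e a : idem mul e -> U a -> idem mul (mul (mul a e) (inv a)).
Proof.
  intros he ua; unfold idem in *.
  now rewrite (mulA _ (mul a e)), (mulA _ a e), muluVK, <- (mulA a e e), he.
Qed.

(* Each of [f], [f'] absorbs the other from the left, and idempotents commute. *)
Lemma idem_unit_cancel f f' c c' : idem mul f -> idem mul f' -> U c -> U c' ->
  mul f c = mul f' c' -> f = f'.
Proof.
  intros hf hf' uc uc' e.
  assert (ef : f = mul f' (mul c' (inv c))) by (now rewrite mulA, <- e, muluK).
  assert (ef' : f' = mul f (mul c (inv c'))) by (now rewrite mulA, e, muluK).
  assert (f'f : mul f' f = f) by (rewrite ef at 1; rewrite mulA, hf'; now symmetry).
  assert (ff' : mul f f' = f') by (rewrite ef' at 1; rewrite mulA, hf; now symmetry).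
  now rewrite <- f'f, idemC, ff'.
Qed.

Lemma idem_conj_of_sandwich e e' a b : idem mul e -> idem mul e' -> U a -> U b ->
  mul (mul a e) b = e' -> mul (mul a e) (inv a) = e'.
Proof.
  intros he he' ua ub eab.
  apply (idem_unit_cancel _ _ (mul a b) one); auto using idem_conj, unitM, unit1.
  now rewrite mul1r, <- eab, <- mulA, mulKu.
Qed.

Lemma idem_fixr_fixl e x : idem mul e -> mul e x = e -> mul x e = e.
Proof.
  intros he ex.
  assert (hxe : idem mul (mul x e)) by (unfold idem; now rewrite <- mulA, (mulA e x), ex, he).
  transitivity (mul (mul x e) e); [now rewrite <- mulA, he|].
  now rewrite <- idemC, mulA, ex, he.
Qed.

Lemma sandwich_Wc_Wstar e a b : idem mul e -> U a -> U b -> mul (mul a e) b = e ->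
  Wc mul one e a /\ Wstar mul one e (mul a b).
Proof.
  intros he ua ub eab.
  assert (ae : mul a e = mul e a).
  { now rewrite <- (idem_conj_of_sandwich e e a b) at 2 by auto; rewrite muluVK. }
  assert (eab' : mul e (mul a b) = e) by (now rewrite mulA, <- ae).
  repeat split; auto using unitM, idem_fixr_fixl.
Qed.

End CommutingIdempotents.

Section RennerCoxeter.
Variables (Lambda S : R -> Prop).
Hypotheses (Hcox : coxeter_system mul one S)
  (idemC : forall e f, idem mul e -> idem mul f -> mul e f = mul f e)
  (unit_idem : forall r, exists w e, U w /\ idem mul e /\ r = mul w e)
  (Lambda_idem : forall e, Lambda e -> idem mul e)
  (Lambda_orbit : forall e, idem mul e -> exists f, Lambda f /\
     (exists w, U w /\ conj_by mul one w f e) /\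
     forall f', Lambda f' -> (exists w, U w /\ conj_by mul one w f' e) -> f' = f)
  (Lambda_parabolic : forall e, Lambda e ->
     (exists I, (forall s, I s -> S s) /\ forall w, Wc mul one e w <-> parabolic mul one I w) /\
     (exists I, (forall s, I s -> S s) /\ forall w, Wstar mul one e w <-> parabolic mul one I w)).

Lemma Lambda_factor r : exists a e b, Lambda e /\ U a /\ U b /\ r = mul (mul a e) b.
Proof.
  destruct (unit_idem r) as [w [f [uw [hf ->]]]].
  destruct (Lambda_orbit f hf) as [e [he [[u [uu [u' [uu' [u'u <-]]]]] _]]].
  exists (mul w u), e, u'; repeat split; auto using unitM.
  - now exists u.
  - now rewrite !mulA.
Qed.

Lemma Lambda_eq_of_sandwich e e' a b : Lambda e -> Lambda e' -> U a -> U b ->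
  mul (mul a e) b = e' -> e = e'.
Proof.
  intros he he' ua ub eab.
  destruct (Lambda_orbit e' (Lambda_idem e' he')) as [f [_ [_ funiq]]].
  transitivity f; [|symmetry]; apply funiq; auto.
  - exists a; split; [exact ua|]; exists (inv a); repeat split; auto using muluV, mulVu.
    now apply (idem_conj_of_sandwich idemC e e' a b); auto.
  - exists one; split; [apply unit1|]; exists one; now rewrite mul1l, !mul1r.
Qed.

Lemma normal_form_Wstar_W_exists a e b : Lambda e -> U a -> U b ->
  exists w1 w2, U w1 /\ U w2 /\ min_left mul one S (Wstar mul one e) w1 /\
    min_right mul one S (Wc mul one e) w2 /\ mul (mul a e) b = mul (mul w1 e) w2.
Proof.
  intros he ua ub; destruct (Lambda_parabolic e he) as [[I [HI HWc]] [J [HJ HWs]]].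
  destruct (min_right_exists S Hcox I HI _ HWc b ub) as [h [hW hmin]].
  assert (uh := WI_unit S Hcox I HI _ HWc h hW).
  destruct (min_left_exists S Hcox J _ HWs (mul a (inv h))) as [h' [h'W h'min]];
    [auto using unitM, unitV|].
  destruct h'W as [uh' [h'e _]].
  exists (mul (mul a (inv h)) h'), (mul h b); repeat split; auto using unitM, unitV.
  rewrite <- !mulA, (mulA h' e), h'e, (mulA e h), <- (proj2 hW).
  now rewrite <- mulA, (mulA (inv h) h), mulVu, mul1l.
Qed.

Lemma normal_form_W_Wstar_exists a e b : Lambda e -> U a -> U b ->
  exists v1 v2, U v1 /\ U v2 /\ min_left mul one S (Wc mul one e) v1 /\
    min_right mul one S (Wstar mul one e) v2 /\ mul (mul a e) b = mul (mul v1 e) v2.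
Proof.
  intros he ua ub; destruct (Lambda_parabolic e he) as [[I [HI HWc]] [J [HJ HWs]]].
  destruct (min_left_exists S Hcox I _ HWc a ua) as [h [hW hmin]].
  assert (uh := WI_unit S Hcox I HI _ HWc h hW).
  destruct (min_right_exists S Hcox J HJ _ HWs (mul (inv h) b)) as [h' [h'W h'min]];
    [auto using unitM, unitV|].
  destruct h'W as [uh' [_ eh']].
  exists (mul a h), (mul h' (mul (inv h) b)); repeat split; auto using unitM, unitV.
  rewrite <- !mulA, (mulA e h'), eh', (mulA h e), (proj2 hW).
  now rewrite <- mulA, (mulA h (inv h)), muluV, mul1l.
Qed.

Lemma normal_form_Wstar_W_unique e e' w1 w2 w1' w2' : Lambda e -> Lambda e' ->
  U w1 -> U w2 -> U w1' -> U w2' ->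
  min_left mul one S (Wstar mul one e) w1 -> min_right mul one S (Wc mul one e) w2 ->
  min_left mul one S (Wstar mul one e') w1' -> min_right mul one S (Wc mul one e') w2' ->
  mul (mul w1 e) w2 = mul (mul w1' e') w2' -> w1' = w1 /\ e' = e /\ w2' = w2.
Proof.
  intros he he' u1 u2 u1' u2' m1 m2 m1' m2' eq.
  assert (eab := sandwich_of_eq e e' w1 w2 w1' w2' u1 u2 u1' u2' eq).
  set (a := mul (inv w1') w1) in eab; set (b := mul w2 (inv w2')) in eab.
  assert (ua : U a) by (apply unitM; auto using unitV).
  assert (ub : U b) by (apply unitM; auto using unitV).
  assert (e' = e) as -> by (symmetry; now apply (Lambda_eq_of_sandwich e e' a b)).
  destruct (sandwich_Wc_Wstar idemC e a b (Lambda_idem e he) ua ub eab) as [aW abW].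
  destruct (Lambda_parabolic e he) as [[I [HI HWc]] [J [HJ HWs]]].
  assert (w2' = w2) as ->.
  { symmetry; apply (min_right_unique S Hcox I HI _ HWc w2' w2 (mul (inv a) (mul a b))); auto.
    - apply Wc_mul; auto using Wc_uinv, Wstar_Wc.
    - unfold b; now rewrite mulKu, muluVK. }
  assert (b = one) as hb by (apply muluV; exact u2).
  rewrite hb, mul1r in abW; repeat split; auto.
  symmetry; apply (min_left_unique S Hcox J HJ _ HWs w1' w1 a); auto.
  unfold a; now rewrite mulVKu.
Qed.

Lemma normal_form_W_Wstar_unique e e' v1 v2 v1' v2' : Lambda e -> Lambda e' ->
  U v1 -> U v2 -> U v1' -> U v2' ->
  min_left mul one S (Wc mul one e) v1 -> min_right mul one S (Wstar mul one e) v2 ->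
  min_left mul one S (Wc mul one e') v1' -> min_right mul one S (Wstar mul one e') v2' ->
  mul (mul v1 e) v2 = mul (mul v1' e') v2' -> v1' = v1 /\ e' = e /\ v2' = v2.
Proof.
  intros he he' u1 u2 u1' u2' m1 m2 m1' m2' eq.
  assert (eab := sandwich_of_eq e e' v1 v2 v1' v2' u1 u2 u1' u2' eq).
  set (a := mul (inv v1') v1) in eab; set (b := mul v2 (inv v2')) in eab.
  assert (ua : U a) by (apply unitM; auto using unitV).
  assert (ub : U b) by (apply unitM; auto using unitV).
  assert (e' = e) as -> by (symmetry; now apply (Lambda_eq_of_sandwich e e' a b)).
  destruct (sandwich_Wc_Wstar idemC e a b (Lambda_idem e he) ua ub eab) as [aW abW].
  destruct (Lambda_parabolic e he) as [[I [HI HWc]] [J [HJ HWs]]].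
  assert (v1' = v1) as ->.
  { symmetry; apply (min_left_unique S Hcox I HI _ HWc v1' v1 a); auto.
    unfold a; now rewrite mulVKu. }
  assert (a = one) as ha by (apply mulVu; exact u1).
  rewrite ha, mul1l in abW; repeat split; auto.
  symmetry; apply (min_right_unique S Hcox J HJ _ HWs v2' v2 b); auto.
  unfold b; now rewrite muluVK.
Qed.

Lemma normal_form_Wstar_W r : exists w1 e w2,
  Lambda e /\ U w1 /\ U w2 /\
  min_left mul one S (Wstar mul one e) w1 /\ min_right mul one S (Wc mul one e) w2 /\
  r = mul (mul w1 e) w2 /\
  forall w1' e' w2', Lambda e' -> U w1' -> U w2' ->
    min_left mul one S (Wstar mul one e') w1' -> min_right mul one S (Wc mul one e') w2' ->
    r = mul (mul w1' e') w2' -> w1' = w1 /\ e' = e /\ w2' = w2.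
Proof.
  destruct (Lambda_factor r) as [a [e [b [he [ua [ub ->]]]]]].
  destruct (normal_form_Wstar_W_exists a e b he ua ub) as [w1 [w2 [u1 [u2 [m1 [m2 ->]]]]]].
  exists w1, e, w2; refine (conj he (conj u1 (conj u2 (conj m1 (conj m2 (conj eq_refl _)))))).
  intros w1' e' w2' he' u1' u2' m1' m2' eq.
  now apply (normal_form_Wstar_W_unique e e' w1 w2 w1' w2').
Qed.

Lemma normal_form_W_Wstar r : exists v1 e v2,
  Lambda e /\ U v1 /\ U v2 /\
  min_left mul one S (Wc mul one e) v1 /\ min_right mul one S (Wstar mul one e) v2 /\
  r = mul (mul v1 e) v2 /\
  forall v1' e' v2', Lambda e' -> U v1' -> U v2' ->
    min_left mul one S (Wc mul one e') v1' -> min_right mul one S (Wstar mul one e') v2' ->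
    r = mul (mul v1' e') v2' -> v1' = v1 /\ e' = e /\ v2' = v2.
Proof.
  destruct (Lambda_factor r) as [a [e [b [he [ua [ub ->]]]]]].
  destruct (normal_form_W_Wstar_exists a e b he ua ub) as [v1 [v2 [u1 [u2 [m1 [m2 ->]]]]]].
  exists v1, e, v2; refine (conj he (conj u1 (conj u2 (conj m1 (conj m2 (conj eq_refl _)))))).
  intros v1' e' v2' he' u1' u2' m1' m2' eq.
  now apply (normal_form_W_Wstar_unique e e' v1 v2 v1' v2').
Qed.

End RennerCoxeter.

End Monoid.

Theorem mainTheorem9 (R : Type) (mul : R -> R -> R) (one : R)
  (Lambda S : R -> Prop)
  (HRC : gen_renner_coxeter mul one Lambda S) (r : R) :
  (exists w1 e w2,
     Lambda e /\ is_unit mul one w1 /\ is_unit mul one w2 /\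
     min_left mul one S (Wstar mul one e) w1 /\ min_right mul one S (Wc mul one e) w2 /\
     r = mul (mul w1 e) w2 /\
     forall w1' e' w2',
       Lambda e' -> is_unit mul one w1' -> is_unit mul one w2' ->
       min_left mul one S (Wstar mul one e') w1' -> min_right mul one S (Wc mul one e') w2' ->
       r = mul (mul w1' e') w2' ->
       w1' = w1 /\ e' = e /\ w2' = w2)
  /\
  (exists v1 e v2,
     Lambda e /\ is_unit mul one v1 /\ is_unit mul one v2 /\
     min_left mul one S (Wc mul one e) v1 /\ min_right mul one S (Wstar mul one e) v2 /\
     r = mul (mul v1 e) v2 /\
     forall v1' e' v2',
       Lambda e' -> is_unit mul one v1' -> is_unit mul one v2' ->
       min_left mul one S (Wc mul one e') v1' -> min_right mul one S (Wstar mul one e') v2' ->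
       r = mul (mul v1' e') v2' ->
       v1' = v1 /\ e' = e /\ v2' = v2).
Proof.
  destruct HRC as [[mulA [mul1l mul1r]] [[_ [unit_idem idemC]]
    [Lambda_idem [Lambda_orbit [_ [_ [Hcox [_ [Lambda_parabolic _]]]]]]]]].
  split; [eapply normal_form_Wstar_W | eapply normal_form_W_Wstar]; eauto.
Qed.
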